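(* Let $A=KQ/I$ be a gentle tree algebra over an algebraically closed field $K$ whose quiver $Q$ has underlying graph $\mathbb{A}_n$ (with arbitrary orientation). If $\mathrm{rad}^2 A=0$, then the trivial extension $T(A)=A\ltimes DA$ is a Brauer line algebra.
   Context: $D=\mathrm{Hom}_K(-,K)$; $T(A)$ has underlying space $A\oplus DA$ with multiplication $(a,f)(b,g)=(ab,ag+fb)$. Gentle: every vertex of $Q$ has at most two incoming and at most two outgoing arrows; for each arrow $\alpha$ there is at most one arrow $\beta$ with $\alpha\beta\in I$, at most one $\gamma$ with $\gamma\alpha\in I$, at most one $\beta'$ with $\alpha\beta'\notin I$ and at most one $\gamma'$ with $\gamma'\alpha\notin I$ (composable arrows); $I$ is admissible and generated by paths of length 2; gentle tree means $Q$ is a tree. $\mathbb{A}_n$ is the path graph with $n$ vertices. A Brauer line algebra with $n$ edges is the Brauer graph algebra (all multiplicities $1$) of the path graph with $n$ edges; concretely it is $KQ'/I'$ with $Q'$: vertices $1,\dots,n$, arrows $\alpha_i:i\to i+1$ and $\beta_i:i+1\to i$ for $1\le i\le n-1$, and $I'=\langle \alpha_i\alpha_{i+1},\ \beta_{i+1}\beta_i,\ \beta_i\alpha_i-\alpha_{i+1}\beta_{i+1}\mid 1\le i\le n-2\rangle$. *)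

From HB Require Import structures.
From mathcomp Require Import all_boot all_order all_algebra all_field.
Set Implicit Arguments. Unset Strict Implicit. Unset Printing Implicit Defensive.
Import GRing.Theory.
Local Open Scope ring_scope.

(* Finite quivers.  A path is a sequence of arrows read left to right:      *)
(* the path [:: a; b] is "a followed by b" (written ab in the paper), and   *)
(* it is represented in an algebra by x a * x b.                            *)
Record quiver := Quiver {
  qvert : finType;
  qarr  : finType;
  qsrc  : qarr -> qvert;
  qtgt  : qarr -> qvert }.

Definition qrel (K : Type) (Q : quiver) := seq (K * seq (qarr Q)).

Section Presentation.
Variables (K : fieldType) (Q : quiver).

Variables (V : lmodType K) (mul : V -> V -> V) (one : V).

Definition path_val (x : qarr Q -> V) (p : seq (qarr Q)) : V :=
  match p with
  | [::] => one
  | a :: p' => foldl (fun acc b => mul acc (x b)) (x a) p'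
  end.

Definition rel_val (x : qarr Q -> V) (r : qrel K Q) : V :=
  \sum_(c <- r) c.1 *: path_val x c.2.

Definition quiver_gens (e : qvert Q -> V) (x : qarr Q -> V) : Prop :=
  [/\ (forall v w, mul (e v) (e w) = (if v == w then e v else 0)),
      \sum_v e v = one
    & (forall a, mul (mul (e (qsrc a)) (x a)) (e (qtgt a)) = x a)].

Definition alg_hom (C : algType K) (phi : V -> C) : Prop :=
  [/\ (forall (c : K) (u v : V), phi (c *: u + v) = c *: phi u + phi v),
      (forall u v, phi (mul u v) = phi u * phi v)
    & phi one = 1].

End Presentation.

(* (V, mul, one) together with the elements e, x is a presentation of the *)
(* bound quiver algebra KQ/I, I the ideal generated by rels: e, x satisfy  *)
(* the relations, and (V, e, x) is universal among K-algebras equipped with *)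
(* such elements (this universal property characterises KQ/I up to iso).    *)
Definition presents (K : fieldType) (V : lmodType K) (mul : V -> V -> V)
    (one : V) (Q : quiver) (rels : seq (qrel K Q))
    (e : qvert Q -> V) (x : qarr Q -> V) : Prop :=
  [/\ quiver_gens mul one e x,
      (forall r, r \in rels -> rel_val mul one x r = 0)
    & (forall (C : algType K) (e' : qvert Q -> C) (x' : qarr Q -> C),
        quiver_gens *%R 1 e' x' ->
        (forall r, r \in rels -> rel_val *%R 1 x' r = 0) ->
        exists phi : V -> C,
          [/\ alg_hom mul one phi, (forall v, phi (e v) = e' v),
              (forall a, phi (x a) = x' a)
            & (forall psi : V -> C, alg_hom mul one psi ->
                (forall v, psi (e v) = e' v) -> (forall a, psi (x a) = x' a) ->
                psi =1 phi)])].

(* Quivers of type A_n.  Vertices 'I_n (paper's vertex i is ordinal i-1);  *)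
(* the edges of A_n are indexed by 'I_n.-1, edge i joining i and i+1.       *)
Lemma edge_hi_proof n (i : 'I_n.-1) : (i.+1 < n)%N.
Proof. by rewrite -ltn_predRL. Qed.

Definition edge_lo n (i : 'I_n.-1) : 'I_n := widen_ord (leq_pred n) i.
Definition edge_hi n (i : 'I_n.-1) : 'I_n := Ordinal (edge_hi_proof i).

Definition An_quiver (n : nat) (o : 'I_n.-1 -> bool) : quiver :=
  @Quiver 'I_n 'I_n.-1
    (fun i => if o i then edge_lo i else edge_hi i)
    (fun i => if o i then edge_hi i else edge_lo i).

(* Membership of a path in I is read off in A = KQ/I: a path lies in I iff  *)
(* its image in A is zero.                                                  *)
Definition zero_rels (K : fieldType) (Q : quiver)
    (Z : seq (qarr Q * qarr Q)) : seq (qrel K Q) :=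
  [seq [:: (1 : K, [:: z.1; z.2])] | z <- Z].

Definition is_qpath (Q : quiver) (p : seq (qarr Q)) : bool :=
  match p with
  | [::] => true
  | a :: p' => path (fun b c => qtgt b == qsrc c) a p'
  end.

Definition gentle (K : fieldType) (Q : quiver) (A : falgType K)
    (x : qarr Q -> A) : Prop :=
  [/\ (forall v : qvert Q, leq #|[set a | qtgt a == v]| 2),
      (forall v : qvert Q, leq #|[set a | qsrc a == v]| 2),
      (forall a : qarr Q,
         leq #|[set b | (qtgt a == qsrc b) && (x a * x b == 0)]| 1 /\
         leq #|[set c | (qtgt c == qsrc a) && (x c * x a == 0)]| 1)
    & (forall a : qarr Q,
         leq #|[set b | (qtgt a == qsrc b) && (x a * x b != 0)]| 1 /\
         leq #|[set c | (qtgt c == qsrc a) && (x c * x a != 0)]| 1)].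

(* I is admissible: it contains all paths of some length m (and I is       *)
(* contained in the square of the arrow ideal since it is generated by      *)
(* paths of length 2).                                                      *)
Definition admissible (K : fieldType) (Q : quiver) (A : falgType K)
    (x : qarr Q -> A) : Prop :=
  exists m : nat, (2 <= m)%N /\
    forall p : seq (qarr Q), size p = m -> is_qpath p -> path_val *%R 1 x p = 0.

Definition in_jacobson (R : unitRingType) (a : R) : Prop :=
  forall b : R, (1 - b * a) \is a GRing.unit.

(* rad^2 R = 0, rad^2 R being spanned by products of two radical elements. *)
Definition rad_sq_zero (R : unitRingType) : Prop :=
  forall a b : R, in_jacobson a -> in_jacobson b -> a * b = 0.

(* Trivial extension T(A) = A (+) DA, DA = Hom_K(A, K), with                *)
(* (a, f)(b, g) = (ab, a g + f b), where (a g)(y) = g(y a), (f b)(y) = f(b y).*)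
Section TrivExt.
Variables (K : fieldType) (A : falgType K).

Definition Dual := 'Hom(A, K^o).
Definition TExt : lmodType K := (A * Dual)%type.

Definition texmul (u v : TExt) : TExt :=
  (u.1 * v.1,
   linfun (fun y : A => (v.2 (y * u.1) : K) + (u.2 (v.1 * y) : K) : K^o)).

Definition texone : TExt := (1, 0).
End TrivExt.

(* Brauer line algebras (Brauer graph algebra, all multiplicities 1, of the *)
(* path graph with n edges).                                                *)
(*  n >= 2: quiver with vertices 'I_n, arrows alpha_i : i -> i+1 (inl i) and *)
(*   beta_i : i+1 -> i (inr i), i : 'I_n.-1, and relations                  *)
(*   alpha_i alpha_(i+1), beta_(i+1) beta_i, beta_i alpha_i - alpha_(i+1) beta_(i+1)*)
(*   together with alpha_i beta_i alpha_i, beta_i alpha_i beta_i (for all i;  *)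
(*   these follow from the others when n >= 3 and are the Brauer relations  *)
(*   needed at the truncated leaves when n = 2).                            *)
Definition brauer_quiver (n : nat) : quiver :=
  @Quiver 'I_n ('I_n.-1 + 'I_n.-1)%type
    (fun a => match a with inl i => edge_lo i | inr i => edge_hi i end)
    (fun a => match a with inl i => edge_hi i | inr i => edge_lo i end).

Definition brauer_rels (K : fieldType) (n : nat) : seq (qrel K (brauer_quiver n)) :=
  let al (i : 'I_n.-1) : qarr (brauer_quiver n) := inl i in
  let be (i : 'I_n.-1) : qarr (brauer_quiver n) := inr i in
  flatten [seq [:: [:: (1, [:: al i; al j])];
                   [:: (1, [:: be j; be i])];
                   [:: (1, [:: be i; al i]); (-1, [:: al j; be j])]]
          | i <- enum 'I_n.-1,
            j <- [seq j <- enum 'I_n.-1 | val j == i.+1]]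
  ++ flatten [seq [:: [:: (1, [:: al i; be i; al i])];
                      [:: (1, [:: be i; al i; be i])]] | i <- enum 'I_n.-1].

Definition loop_quiver : quiver :=
  @Quiver unit unit (fun _ => tt) (fun _ => tt).

Definition loop_rels (K : fieldType) : seq (qrel K loop_quiver) :=
  [:: [:: (1, [:: tt; tt])]].

Definition is_brauer_line (K : fieldType) (n : nat) (V : lmodType K)
    (mul : V -> V -> V) (one : V) : Prop :=
  if n == 1%N then
    exists e x, @presents K V mul one loop_quiver (loop_rels K) e x
  else
    exists e x, @presents K V mul one (brauer_quiver n) (brauer_rels K n) e x.

From HB Require Import structures.
From mathcomp Require Import all_boot all_order all_algebra all_field.
Set Implicit Arguments. Unset Strict Implicit. Unset Printing Implicit Defensive.
Import GRing.Theory.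
Local Open Scope ring_scope.

(* Every arrow of A lies in the radical, because the ideal spanned by the
   arrows is nilpotent; so rad^2 A = 0 kills all products of two arrows and A
   has the basis {e_v} + {x_a}, with dual basis {e_v^*} + {x_a^*} of DA.  In
   T(A) = A + DA one computes x_a x_a^* = e_(s a)^* and x_a^* x_a = e_(t a)^*,
   while every other product of two elements among the x_a, x_a^* vanishes.
   Hence for the edge i of A_n the pair {x_i, x_i^*}, ordered by the
   orientation of i, provides the Brauer arrows alpha_i and beta_i, the e_v^*
   span the socle, and T(A) has the multiplication table of the Brauer line
   algebra on matching bases.  Since the Brauer relations force this same
   table in every algebra satisfying them, the linear map matching the bases
   is the unique algebra map out of T(A).  For n = 1, T(K) = K[x]/(x^2). *)

Lemma lfunE_linear (K : fieldType) (aT rT : vectType K) (f : aT -> rT) :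
  linear f -> linfun f =1 f.
Proof.
move=> fL u.
pose F : {linear aT -> rT} := HB.pack f (GRing.isLinear.Build K aT rT *:%R f fL).
exact: (lfunE F u).
Qed.

Section TrivialExtension.
Variables (K : fieldType) (A : falgType K).

Definition triv_ext : Type := (A * Dual A)%type.
HB.instance Definition _ := GRing.Lmodule.on triv_ext.

Lemma texmul_fst (u v : TExt A) : (texmul u v).1 = u.1 * v.1.
Proof. by []. Qed.

Lemma texmul_snd (u v : TExt A) y :
  (texmul u v).2 y = v.2 (y * u.1) + u.2 (v.1 * y).
Proof.
rewrite lfunE_linear // => c a b /=.
by rewrite !mulrDl !mulrDr -!scalerAl -!scalerAr !linearD !linearZ /=
  addrACA -!mulrDr.
Qed.

Lemma texmulA : associative (@texmul K A).
Proof.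
move=> u v w; congr pair; first by rewrite /= mulrA.
by apply/lfunP=> y; rewrite !texmul_snd !texmul_fst !mulrA addrA.
Qed.

Lemma texmul1 : left_id (texone A) (@texmul K A).
Proof.
case=> a f; congr pair; first by rewrite /= mul1r.
by apply/lfunP=> y; rewrite texmul_snd /= mulr1 zero_lfunE addr0.
Qed.

Lemma texmulr1 : right_id (texone A) (@texmul K A).
Proof.
case=> a f; congr pair; first by rewrite /= mulr1.
by apply/lfunP=> y; rewrite texmul_snd /= mul1r zero_lfunE add0r.
Qed.

Lemma texmulDl : left_distributive (@texmul K A) +%R.
Proof.
move=> u v w; congr pair; first by rewrite /= mulrDl.
apply/lfunP=> y; rewrite add_lfunE !texmul_snd /= add_lfunE mulrDr linearD.
by rewrite addrACA.
Qed.

Lemma texmulDr : right_distributive (@texmul K A) +%R.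
Proof.
move=> u v w; congr pair; first by rewrite /= mulrDr.
apply/lfunP=> y; rewrite add_lfunE !texmul_snd /= add_lfunE mulrDl linearD.
by rewrite addrACA.
Qed.

Lemma texone_neq0 : texone A != 0 :> triv_ext.
Proof. by apply/eqP=> /(congr1 fst) /eqP; rewrite oner_eq0. Qed.

HB.instance Definition _ := GRing.Zmodule_isNzRing.Build triv_ext
  texmulA texmul1 texmulr1 texmulDl texmulDr texone_neq0.

Lemma texscaleAl k (u v : triv_ext) : k *: (u * v) = (k *: u) * v.
Proof.
congr pair; first by rewrite /= scalerAl.
apply/lfunP=> y; rewrite scale_lfunE !texmul_snd /= scale_lfunE -scalerAr.
by rewrite linearZ /= scalerDr.
Qed.
HB.instance Definition _ := GRing.Lmodule_isLalgebra.Build K triv_ext texscaleAl.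

Lemma texscaleAr k (u v : triv_ext) : k *: (u * v) = u * (k *: v).
Proof.
congr pair; first by rewrite /= scalerAr.
apply/lfunP=> y; rewrite scale_lfunE !texmul_snd /= scale_lfunE -scalerAl.
by rewrite linearZ /= scalerDr.
Qed.
HB.instance Definition _ := GRing.Lalgebra_isAlgebra.Build K triv_ext texscaleAr.

Lemma triv_ext_mul_fst (u v : triv_ext) : (u * v).1 = u.1 * v.1.
Proof. by []. Qed.

Lemma triv_ext_mul_snd (u v : triv_ext) y : (u * v).2 y = v.2 (y * u.1) + u.2 (v.1 * y).
Proof. exact: texmul_snd. Qed.

End TrivialExtension.

Lemma semilinear_map0 (K : fieldType) (U W : lmodType K) (f : U -> W) :
  (forall c u v, f (c *: u + v) = c *: f u + f v) -> f 0 = 0.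
Proof.
move=> fD; have := fD 1 0 0; rewrite scaler0 addr0 scale1r => /eqP.
by rewrite -subr_eq subrr eq_sym => /eqP.
Qed.

Section MultiplicationTable.
Variables (K : fieldType) (V C : algType K) (B : finType).
Variables (bV : B -> V) (bC : B -> C) (coord : B -> V -> K).
Hypothesis coordD : forall k c u v, coord k (c *: u + v) = c * coord k u + coord k v.
Hypothesis coord_span : forall u, u = \sum_k coord k u *: bV k.
Hypothesis coord_basis : forall k l, coord k (bV l) = (l == k)%:R.
Variable table : B -> B -> option B.
Hypothesis tableV : forall k l, bV k * bV l = oapp bV 0 (table k l).
Hypothesis tableC : forall k l, bC k * bC l = oapp bC 0 (table k l).
Variable unit_support : pred B.
Hypothesis oneV : 1 = \sum_(k | unit_support k) bV k.
Hypothesis oneC : 1 = \sum_(k | unit_support k) bC k.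

Definition table_hom u := \sum_k coord k u *: bC k.

Lemma table_homD c u v : table_hom (c *: u + v) = c *: table_hom u + table_hom v.
Proof.
rewrite /table_hom scaler_sumr -big_split /=; apply: eq_bigr => k _.
by rewrite coordD scalerDl scalerA.
Qed.

Lemma table_hom0 : table_hom 0 = 0.
Proof. exact: semilinear_map0 table_homD. Qed.

Lemma table_hom_add u v : table_hom (u + v) = table_hom u + table_hom v.
Proof. by have := table_homD 1 u v; rewrite !scale1r. Qed.

Lemma table_homZ c u : table_hom (c *: u) = c *: table_hom u.
Proof. by have := table_homD c u 0; rewrite !addr0 table_hom0 addr0. Qed.

Lemma table_hom_sum (I : Type) (r : seq I) (P : pred I) (F : I -> V) :
  table_hom (\sum_(i <- r | P i) F i) = \sum_(i <- r | P i) table_hom (F i).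
Proof. exact: (big_morph _ table_hom_add table_hom0). Qed.

Lemma table_hom_basis k : table_hom (bV k) = bC k.
Proof.
rewrite /table_hom (bigD1 k) //= coord_basis eqxx scale1r big1 ?addr0 //.
by move=> l /negbTE nl; rewrite coord_basis eq_sym nl scale0r.
Qed.

Lemma table_homM u v : table_hom (u * v) = table_hom u * table_hom v.
Proof.
rewrite {1}[u]coord_span {1}[v]coord_span mulr_suml table_hom_sum.
rewrite [table_hom u]/table_hom [table_hom v]/table_hom mulr_suml.
apply: eq_bigr => k _; rewrite mulr_sumr table_hom_sum mulr_sumr.
apply: eq_bigr => l _; rewrite -!scalerAl -!scalerAr !table_homZ tableV tableC.
by case: (table k l) => [m|] /=; rewrite ?table_hom_basis ?table_hom0.
Qed.

Lemma table_hom1 : table_hom 1 = 1.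
Proof.
by rewrite oneV table_hom_sum oneC; apply: eq_bigr => k _; rewrite table_hom_basis.
Qed.

Lemma table_hom_universal :
  [/\ alg_hom *%R 1 table_hom, (forall k, table_hom (bV k) = bC k)
    & forall psi : V -> C, alg_hom *%R 1 psi -> (forall k, psi (bV k) = bC k) ->
        psi =1 table_hom].
Proof.
split; [by split; [exact: table_homD|exact: table_homM|exact: table_hom1]
       | exact: table_hom_basis |].
move=> psi [psiD _ _] psi_basis u.
have psi0 := semilinear_map0 psiD.
rewrite {1}[u]coord_span /table_hom.
elim: (index_enum B) => [|k r IH]; first by rewrite !big_nil psi0.
by rewrite !big_cons psiD IH psi_basis.
Qed.

End MultiplicationTable.

Section QuiverGenerators.
Variables (K : fieldType) (Q : quiver) (C : algType K).
Variables (e : qvert Q -> C) (x : qarr Q -> C).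
Hypothesis gens : quiver_gens *%R 1 e x.

Lemma idem_mul v w : e v * e w = if v == w then e v else 0.
Proof. by case: gens. Qed.

Lemma sum_idem : \sum_v e v = 1.
Proof. by case: gens. Qed.

Lemma idem_arrow v a : e v * x a = if v == qsrc a then x a else 0.
Proof.
case: gens => ee _ exe; have [->|ne] := eqVneq v (qsrc a).
  by rewrite -exe !mulrA ee eqxx.
by rewrite -exe !mulrA ee (negbTE ne) !mul0r.
Qed.

Lemma arrow_idem a v : x a * e v = if v == qtgt a then x a else 0.
Proof.
case: gens => ee _ exe; have [->|ne] := eqVneq v (qtgt a).
  by rewrite -exe -!mulrA ee eqxx.
by rewrite -exe -!mulrA ee eq_sym (negbTE ne) !mulr0.
Qed.

Lemma arrow_mul_eq0 a b : qtgt a != qsrc b -> x a * x b = 0.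
Proof.
move=> ne; have -> : x a = x a * e (qtgt a) by rewrite arrow_idem eqxx.
by rewrite -mulrA idem_arrow (negbTE ne) mulr0.
Qed.

Lemma path_val_rcons p a : path_val *%R 1 x (rcons p a) = path_val *%R 1 x p * x a.
Proof. by case: p => [|b p] /=; rewrite ?mul1r ?foldl_rcons. Qed.

Lemma path_val_cons a p : path_val *%R 1 x (a :: p) = x a * path_val *%R 1 x p.
Proof.
elim/last_ind: p => [|p b IH]; first by rewrite mulr1.
by rewrite -rcons_cons !path_val_rcons IH mulrA.
Qed.

Lemma path_val_nonpath p : ~~ is_qpath p -> path_val *%R 1 x p = 0.
Proof.
case: p => [//|a p]; elim: p a => [//|b p IH] a.
move=> /(@nandP (qtgt a == qsrc b) (is_qpath (b :: p))) np; rewrite path_val_cons.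
case: np => [/arrow_mul_eq0 ab0 | /IH ->]; last by rewrite mulr0.
by rewrite path_val_cons mulrA ab0 mul0r.
Qed.

End QuiverGenerators.

Lemma nilpotent_unit1B (R : unitRingType) (z : R) m :
  z ^+ m = 0 -> 1 - z \is a GRing.unit.
Proof.
move=> zm; apply/unitrP; exists (\sum_(i < m) z ^+ i).
have inv_r : (1 - z) * \sum_(i < m) z ^+ i = 1.
  by rewrite -opprB mulNr -subrX1 zm sub0r opprK.
have comm : GRing.comm (1 - z) (\sum_(i < m) z ^+ i).
  apply: commr_sum => i _; apply/commr_sym/commrB; first exact: commr1.
  exact/commr_sym/commrX.
by rewrite -comm inv_r.
Qed.

Lemma prodv_sum_lines (K : fieldType) (A : falgType K) (I J : finType)
    (f : I -> A) (g : J -> A) (W : {vspace A}) :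
  (forall i j, f i * g j \in W) -> ((\sum_i <[f i]>) * (\sum_j <[g j]>) <= W)%VS.
Proof.
move=> fgW; rewrite big_distrl /=; apply/subv_sumP => i _.
by rewrite big_distrr /=; apply/subv_sumP => j _; rewrite prodv_line -memvE.
Qed.

Section ArrowRepresentation.
Variables (K : fieldType) (Q : quiver) (a : qarr Q).
Hypothesis loopfree : qsrc a != qtgt a.

Definition vertex_rep (w : qvert Q) : 'M[K]_2 :=
  if w == qsrc a then delta_mx 0 0 else if w == qtgt a then delta_mx 1 1 else 0.

Definition arrow_rep (b : qarr Q) : 'M[K]_2 := if b == a then delta_mx 0 1 else 0.

Lemma delta_mxM (i j k l : 'I_2) :
  delta_mx i j * delta_mx k l = delta_mx i l *+ (j == k) :> 'M[K]_2.
Proof. by rewrite -mulmxE mul_delta_mx_cond. Qed.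

Lemma arrow_rep_mul b c : arrow_rep b * arrow_rep c = 0.
Proof.
by rewrite /arrow_rep; do 2 case: eqP => _; rewrite ?mulr0 ?mul0r ?delta_mxM.
Qed.

Lemma arrow_rep_gens : quiver_gens *%R 1 vertex_rep arrow_rep.
Proof.
have tgt_src : qtgt a != qsrc a by rewrite eq_sym.
have rep_src : vertex_rep (qsrc a) = delta_mx 0 0 by rewrite /vertex_rep eqxx.
have rep_tgt : vertex_rep (qtgt a) = delta_mx 1 1.
  by rewrite /vertex_rep (negbTE tgt_src) eqxx.
have rep_other w : w != qsrc a -> w != qtgt a -> vertex_rep w = 0.
  by rewrite /vertex_rep => /negbTE-> /negbTE->.
have vertex_cases w : [\/ w = qsrc a, w = qtgt a | (w != qsrc a) && (w != qtgt a)].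
  by case: eqP => [|/eqP ns]; [constructor 1 | case: eqP => [|/eqP nt]];
    [|constructor 2 | constructor 3; apply/andP].
split=> [w u | | b].
- case: (vertex_cases w) => [->|->|/andP[ws wt]];
  case: (vertex_cases u) => [->|->|/andP[us ut]];
  rewrite ?rep_src ?rep_tgt ?(rep_other _ ws wt) ?(rep_other _ us ut) ?delta_mxM ?eqxx
    ?mulr0 ?mul0r ?(negbTE loopfree) ?(negbTE tgt_src)
    ?(negbTE ws) ?(negbTE wt) ?(negbTE us) ?(negbTE ut) //;
  by case: ifP => // /eqP uE; move: us ut; rewrite -uE eqxx.
- rewrite (bigD1 (qsrc a)) //= (bigD1 (qtgt a)) ?tgt_src //= big1 => [|w /andP[]];
    last exact: rep_other.
  rewrite rep_src rep_tgt addr0; apply/matrixP => -[[|[|i]] //= ?] [[|[|j]] //= ?].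
  all: rewrite ?mxE -?val_eqE /= ?addr0 ?add0r //.
- rewrite /arrow_rep; case: eqP => [->|_]; last by rewrite mulr0 mul0r.
  by rewrite rep_src rep_tgt !delta_mxM.
Qed.

End ArrowRepresentation.

Record sqzero_basis (K : fieldType) (Q : quiver) (A : falgType K) := SqzeroBasis {
  sqz_idem : qvert Q -> A;
  sqz_arrow : qarr Q -> A;
  sqz_idem_coord : qvert Q -> Dual A;
  sqz_arrow_coord : qarr Q -> Dual A;
  sqz_gens : quiver_gens *%R 1 sqz_idem sqz_arrow;
  sqz_arrow_mul : forall a b, sqz_arrow a * sqz_arrow b = 0;
  sqz_idem_coord_idem : forall v w, sqz_idem_coord v (sqz_idem w) = (w == v)%:R;
  sqz_idem_coord_arrow : forall v a, sqz_idem_coord v (sqz_arrow a) = 0;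
  sqz_arrow_coord_idem : forall a w, sqz_arrow_coord a (sqz_idem w) = 0;
  sqz_arrow_coord_arrow : forall a b, sqz_arrow_coord a (sqz_arrow b) = (b == a)%:R;
  sqz_expand : forall y, y = \sum_v sqz_idem_coord v y *: sqz_idem v
                           + \sum_a sqz_arrow_coord a y *: sqz_arrow a }.

Section ZeroRelationAlgebra.
Variables (K : fieldType) (Q : quiver) (Z : seq (qarr Q * qarr Q)).
Variables (A : falgType K) (e : qvert Q -> A) (x : qarr Q -> A).
Hypothesis pres : @presents K A *%R 1 Q (zero_rels K Z) e x.

Let gens : quiver_gens *%R 1 e x. Proof. by case: pres. Qed.

Lemma zero_rels_sat (C : algType K) (x' : qarr Q -> C) :
  (forall a b, (a, b) \in Z -> x' a * x' b = 0) ->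
  forall r, r \in zero_rels K Z -> rel_val *%R 1 x' r = 0.
Proof.
move=> x'Z _ /mapP[[a b] ab ->].
by rewrite /rel_val big_cons big_nil /= addr0 scale1r x'Z.
Qed.

Lemma zero_rel_mul a b : (a, b) \in Z -> x a * x b = 0.
Proof.
case: pres => _ rels _ ab.
have := rels _ (map_f (fun z : qarr Q * qarr Q => [:: (1 : K, [:: z.1; z.2])]) ab).
by rewrite /rel_val big_cons big_nil /= addr0 scale1r.
Qed.

Lemma zero_rels_lift (C : algType K) (e' : qvert Q -> C) (x' : qarr Q -> C) :
  quiver_gens *%R 1 e' x' -> (forall a b, (a, b) \in Z -> x' a * x' b = 0) ->
  exists phi : A -> C, [/\ alg_hom *%R 1 phi, forall v, phi (e v) = e' v
                         & forall a, phi (x a) = x' a].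
Proof.
move=> gens' x'Z; case: pres => _ _ /(_ _ e' x' gens' (zero_rels_sat x'Z)).
by case=> phi [phiH phie phix _]; exists phi.
Qed.

Definition idem_space : {vspace A} := (\sum_v <[e v]>)%VS.
Definition arrow_space : {vspace A} := (\sum_a <[x a]>)%VS.

Lemma idem_in_space v : e v \in idem_space.
Proof. exact: (subvP (sumv_sup v _ (subvv _))) (memv_line _). Qed.

Lemma arrow_in_space a : x a \in arrow_space.
Proof. exact: (subvP (sumv_sup a _ (subvv _))) (memv_line _). Qed.

Lemma one_in_idem_space : 1 \in idem_space.
Proof. by rewrite -(sum_idem gens) memv_suml // => v _; apply: idem_in_space. Qed.

(* The identity of A and the lift of the generators into the subalgebra they  *)
(* generate both extend the generators, so uniqueness makes that subalgebra A. *)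
Lemma mem_agenv_gens y : y \in agenv (idem_space + arrow_space).
Proof.
pose B : {aspace A} := agenv_aspace (idem_space + arrow_space).
have inB u : u \in (idem_space + arrow_space)%VS -> u \in B.
  exact: subvP (sub_agenv _) u.
pose e' v : subvs_of B := Subvs (inB _ (subvP (addvSl _ _) _ (idem_in_space v))).
pose x' a : subvs_of B := Subvs (inB _ (subvP (addvSr _ _) _ (arrow_in_space a))).
have val1 : val (1%R : subvs_of B) = 1.
  by apply/eqP; rewrite algid_eq1 memvE sub1_agenv.
have gens' : quiver_gens *%R 1 e' x'.
  case: gens => ee sum_e exe; split.
  - by move=> v w; apply: val_inj; rewrite /= ee; case: ifP.
  - apply: val_inj; rewrite val1 -sum_e.
    by change (vsval (\sum_v e' v) = \sum_v e v); rewrite raddf_sum.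
  - by move=> a; apply: val_inj; rewrite /= exe.
have x'Z a b : (a, b) \in Z -> x' a * x' b = 0.
  by move=> ab; apply: val_inj; rewrite /= zero_rel_mul.
have [phi [[phiD phiM phi1] phie phix]] := zero_rels_lift gens' x'Z.
case: pres => _ rels /(_ _ e x gens rels) [idA [_ _ _ uniq]].
have inclH : alg_hom *%R 1 (vsval \o phi).
  by split=> [c u w|u w|] /=; rewrite ?phiD ?phiM ?phi1.
have idH : alg_hom *%R 1 (@id A) by [].
have -> : y = vsval (phi y).
  have := uniq _ inclH (fun v => congr1 vsval (phie v)).
  move/(_ (fun a => congr1 vsval (phix a)) y) => /= ->.
  by rewrite -(uniq _ idH (fun v => erefl) (fun a => erefl)).
exact: subvsP.
Qed.

Lemma idem_spaceM : (idem_space * idem_space <= idem_space)%VS.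
Proof.
apply: prodv_sum_lines => v w; rewrite (idem_mul gens).
by case: ifP => _; rewrite ?idem_in_space ?mem0v.
Qed.

Lemma idem_arrow_spaceM : (idem_space * arrow_space <= arrow_space)%VS.
Proof.
apply: prodv_sum_lines => v a; rewrite (idem_arrow gens).
by case: ifP => _; rewrite ?arrow_in_space ?mem0v.
Qed.

Lemma arrow_idem_spaceM : (arrow_space * idem_space <= arrow_space)%VS.
Proof.
apply: prodv_sum_lines => a v; rewrite (arrow_idem gens).
by case: ifP => _; rewrite ?arrow_in_space ?mem0v.
Qed.

Lemma arrow_space_exp k :
  (arrow_space ^+ k <= \sum_(p : k.-tuple (qarr Q)) <[path_val *%R 1 x p]>)%VS.
Proof.
elim: k => [|k IH]; first exact: (sumv_sup [tuple]).
rewrite expvSr; apply: subv_trans (prodvSl _ IH) _.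
apply: prodv_sum_lines => p a; rewrite -path_val_rcons.
exact: (subvP (sumv_sup [tuple of rcons p a] _ (subvv _))) (memv_line _).
Qed.

Section NilpotentArrows.
Variable m : nat.
Hypothesis arrow_nil : (arrow_space ^+ m <= 0)%VS.

(* The span of the paths of length at least j, as arrow_space ^+ m = 0. *)
Definition arrow_space_ge j : {vspace A} := (\sum_(i < m) arrow_space ^+ (j + i))%VS.

Lemma arrow_space_exp_ge i j : (j <= i)%N -> (arrow_space ^+ i <= arrow_space_ge j)%VS.
Proof.
move=> ji; have [lt_ij_m | le_m_ij] := ltnP (i - j) m.
  by apply: (sumv_sup (Ordinal lt_ij_m)) => //=; rewrite subnKC.
rewrite -(subnKC (leq_trans le_m_ij (leq_subr j i))) expvD.
by apply: subv_trans (prodvSl _ arrow_nil) _; rewrite prod0v sub0v.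
Qed.

Lemma arrow_space_sub_ge1 : (arrow_space <= arrow_space_ge 1)%VS.
Proof. exact: (@arrow_space_exp_ge 1 1). Qed.

Lemma arrow_space_geM j l :
  (arrow_space_ge j * arrow_space_ge l <= arrow_space_ge (j + l))%VS.
Proof.
rewrite /arrow_space_ge big_distrl /=; apply/subv_sumP => i _.
rewrite big_distrr /=; apply/subv_sumP => k _.
by rewrite -expvD; apply: arrow_space_exp_ge; rewrite addnACA leq_addr.
Qed.

Lemma arrow_space_ge_m : (arrow_space_ge m <= 0)%VS.
Proof.
apply/subv_sumP => i _; rewrite -(subnKC (leq_addr i m)) expvD.
by apply: subv_trans (prodvSl _ arrow_nil) _; rewrite prod0v sub0v.
Qed.

Lemma mem_idem_arrow_ge y : y \in (idem_space + arrow_space_ge 1)%VS.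
Proof.
apply: (subvP (agenv_sub_modl _ _)); last exact: mem_agenv_gens.
  by rewrite -memvE; apply: subvP (addvSl _ _) _ one_in_idem_space.
rewrite prodvDl !prodvDr !subv_add -!andbA; apply/and4P; split.
- exact: subv_trans idem_spaceM (addvSl _ _).
- apply: subv_trans (addvSr _ _); rewrite /arrow_space_ge big_distrr /=.
  apply/subv_sumP => i _; case: (1 + i)%N (leq_addr i 1) => // k _.
  rewrite expvSl prodvA; apply: subv_trans (prodvSl _ idem_arrow_spaceM) _.
  by rewrite -expvSl; apply: arrow_space_exp_ge.
- apply: subv_trans (addvSr _ _); apply: subv_trans arrow_idem_spaceM _.
  exact: arrow_space_sub_ge1.
- apply: subv_trans (addvSr _ _); rewrite /arrow_space_ge big_distrr /=.
  by apply/subv_sumP => i _; rewrite -expvSl; apply: arrow_space_exp_ge.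
Qed.

Lemma arrow_space_ge1_mul :
  ((idem_space + arrow_space_ge 1) * arrow_space <= arrow_space_ge 1)%VS.
Proof.
rewrite prodvDl subv_add; apply/andP; split.
  exact: subv_trans idem_arrow_spaceM arrow_space_sub_ge1.
rewrite /arrow_space_ge big_distrl /=; apply/subv_sumP => i _.
by rewrite -expvSr; apply: arrow_space_exp_ge.
Qed.

Lemma nilpotent_arrow_in_jacobson a : in_jacobson (x a).
Proof.
move=> b; apply: (@nilpotent_unit1B _ _ m).
have bx1 : b * x a \in arrow_space_ge 1.
  apply: subvP arrow_space_ge1_mul _ _.
  exact: memv_mul (mem_idem_arrow_ge b) (arrow_in_space a).
have bx_exp j : (b * x a) ^+ j.+1 \in arrow_space_ge j.+1.
  elim: j => [|j IH]; first by rewrite expr1.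
  rewrite exprSr; have := subvP (arrow_space_geM j.+1 1); rewrite addn1.
  by apply; apply: memv_mul.
case: m arrow_nil bx_exp arrow_space_ge_m => [|m'] nil0 bx_exp ge0.
  by apply/eqP; rewrite expr0 -memv0; apply: (subvP nil0); rewrite expv0 memv_line.
by apply/eqP; rewrite -memv0; apply: (subvP ge0).
Qed.
End NilpotentArrows.

Lemma arrow_space_nil m :
  (forall p, size p = m -> is_qpath p -> path_val *%R 1 x p = 0) ->
  (arrow_space ^+ m <= 0)%VS.
Proof.
move=> paths0; apply: subv_trans (arrow_space_exp m) _; apply/subv_sumP => p _.
have [qp | nqp] := boolP (is_qpath p).
  by rewrite paths0 ?size_tuple // -memvE mem0v.
by rewrite (path_val_nonpath gens nqp) -memvE mem0v.
Qed.

Lemma arrow_in_jacobson a : admissible x -> in_jacobson (x a).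
Proof.
by case=> m [_ /arrow_space_nil nil]; apply: nilpotent_arrow_in_jacobson nil a.
Qed.

Lemma arrow_mul0 a b : admissible x -> rad_sq_zero A -> x a * x b = 0.
Proof.
move=> adm rad2; have [_|ne] := eqVneq (qtgt a) (qsrc b).
  by apply: rad2; apply: arrow_in_jacobson.
by rewrite (arrow_mul_eq0 gens ne).
Qed.

Lemma mem_idem_arrow_space y : (forall a b, x a * x b = 0) ->
  y \in (idem_space + arrow_space)%VS.
Proof.
move=> xx0; have arrow_sq0 : (arrow_space ^+ 2 <= 0)%VS.
  by apply: prodv_sum_lines => a b; rewrite xx0 mem0v.
apply: subvP (addvS (subvv _) _) _ (mem_idem_arrow_ge arrow_sq0 y).
apply/subv_sumP => -[[|[|i]] //= _ _].
exact: subv_trans arrow_sq0 (sub0v _).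
Qed.

Lemma idem_coord_exists v : exists2 f : Dual A,
  forall w, f (e w) = (w == v)%:R & forall a, f (x a) = 0.
Proof.
pose e' w : K^o := (w == v)%:R; pose x' (a : qarr Q) : K^o := 0.
have gens' : quiver_gens *%R 1 e' x'.
  split=> [w u | | a]; rewrite /e' /x' ?mulr0 ?mul0r //.
    rewrite -natrM mulnb; have [->|nwu] := eqVneq w u; first by rewrite andbb.
    by case: eqP => [wv|]; case: eqP => [uv|] //; case/eqP: nwu; rewrite wv uv.
  by rewrite (bigD1 v) //= eqxx big1 ?addr0 // => w /negbTE ->.
have x'Z a b : (a, b) \in Z -> x' a * x' b = 0 by rewrite mulr0.
have [phi [[phiD _ _] phie phix]] := zero_rels_lift gens' x'Z.
by exists (linfun phi) => [w|a]; rewrite lfunE_linear ?phie ?phix.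
Qed.

Lemma arrow_coord_exists a : qsrc a != qtgt a -> exists2 f : Dual A,
  forall w, f (e w) = 0 & forall b, f (x b) = (b == a)%:R.
Proof.
move=> loopfree; have x'Z b c : (b, c) \in Z -> arrow_rep K a b * arrow_rep K a c = 0.
  by move=> _; apply: arrow_rep_mul.
have [phi [[phiD _ _] phie phix]] := zero_rels_lift (arrow_rep_gens K loopfree) x'Z.
have fL : linear (fun y => phi y 0 1 : K^o) by move=> c u w; rewrite phiD !mxE.
exists (linfun (fun y => phi y 0 1 : K^o)) => [w|b];
  rewrite lfunE_linear // ?phie ?phix.
  by rewrite /vertex_rep; case: ifP => _; [|case: ifP => _]; rewrite ?mxE -?val_eqE.
by rewrite /arrow_rep; case: eqP; rewrite ?mxE -?val_eqE.
Qed.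

Lemma idem_arrow_expand (ce : qvert Q -> Dual A) (cx : qarr Q -> Dual A) :
  (forall a b, x a * x b = 0) ->
  (forall v w, ce v (e w) = (w == v)%:R) -> (forall v a, ce v (x a) = 0) ->
  (forall a w, cx a (e w) = 0) -> (forall a b, cx a (x b) = (b == a)%:R) ->
  forall y, y = \sum_v ce v y *: e v + \sum_a cx a y *: x a.
Proof.
move=> xx0 cee cex cxe cxx.
pose expand y := \sum_v ce v y *: e v + \sum_a cx a y *: x a.
have expandL : linear expand.
  move=> c u w; rewrite /expand scalerDr addrACA !scaler_sumr -!big_split /=.
  by congr (_ + _); apply: eq_bigr => i _; rewrite linearP scalerDl scalerA.
have expand_e v : expand (e v) = e v.
  rewrite /expand [X in _ + X]big1 ?addr0 => [|a _]; last by rewrite cxe scale0r.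
  rewrite (bigD1 v) //= cee eqxx scale1r big1 ?addr0 // => w /negbTE wv.
  by rewrite cee eq_sym wv scale0r.
have expand_x a : expand (x a) = x a.
  rewrite /expand big1 ?add0r => [|v _]; last by rewrite cex scale0r.
  rewrite (bigD1 a) //= cxx eqxx scale1r big1 ?addr0 // => b /negbTE ba.
  by rewrite cxx eq_sym ba scale0r.
have fixed : (idem_space + arrow_space <= lker (linfun expand - \1%VF))%VS.
  rewrite subv_add; apply/andP; split; apply/subv_sumP => i _;
    by rewrite -memvE memv_ker add_lfunE opp_lfunE id_lfunE lfunE_linear
      ?expand_e ?expand_x ?subrr.
move=> y; have := subvP fixed y (mem_idem_arrow_space y xx0).
by rewrite memv_ker add_lfunE opp_lfunE id_lfunE lfunE_linear // subr_eq0 => /eqP.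
Qed.

Lemma zero_rels_sqzero_basis : admissible x -> rad_sq_zero A ->
  (forall a : qarr Q, qsrc a != qtgt a) ->
  exists B : sqzero_basis Q A, sqz_idem B = e /\ sqz_arrow B = x.
Proof.
move=> adm rad2 loopfree.
have xx0 a b : x a * x b = 0 by apply: arrow_mul0.
have [ce cee cex] := fin_all_exists2 idem_coord_exists.
have [cx cxe cxx] := fin_all_exists2 (fun a => arrow_coord_exists (loopfree a)).
have expand := idem_arrow_expand xx0 cee cex cxe cxx.
by exists (SqzeroBasis gens xx0 cee cex cxe cxx expand).
Qed.

End ZeroRelationAlgebra.

Section TrivialExtensionBasis.
Variables (K : fieldType) (Q : quiver) (A : falgType K) (B : sqzero_basis Q A).
Local Notation e := (sqz_idem B).
Local Notation x := (sqz_arrow B).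
Local Notation ce := (sqz_idem_coord B).
Local Notation cx := (sqz_arrow_coord B).

Definition te_e v : triv_ext A := (e v, 0).
Definition te_x a : triv_ext A := (x a, 0).
Definition te_de v : triv_ext A := (0, ce v).
Definition te_dx a : triv_ext A := (0, cx a).

Lemma triv_ext_eq (u v : triv_ext A) : u.1 = v.1 ->
  (forall w, u.2 (e w) = v.2 (e w)) -> (forall a, u.2 (x a) = v.2 (x a)) -> u = v.
Proof.
case: u v => [a f] [b g] /= -> fge fgx; congr pair; apply/lfunP => y.
rewrite [y](sqz_expand B) !linearD !linear_sum /=.
by congr (_ + _); apply: eq_bigr => i _; rewrite !linearZ /= ?fge ?fgx.
Qed.

Let gens := sqz_gens B.

(* Compare both sides on A and on the basis of A, where all coordinates are  *)
(* Kronecker deltas resolved by case analysis on the vertex/arrow equalities. *)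
Ltac te_table :=
  try (case: eqP => [?|?]; try subst);
  apply: triv_ext_eq => [|?|?];
  rewrite ?triv_ext_mul_fst ?triv_ext_mul_snd /= ?zero_lfunE
    ?(idem_mul gens) ?(idem_arrow gens) ?(arrow_idem gens) ?sqz_arrow_mul
    ?mulr0 ?mul0r ?addr0 ?add0r;
  repeat (rewrite ?sqz_idem_coord_idem ?sqz_idem_coord_arrow ?sqz_arrow_coord_idem
            ?sqz_arrow_coord_arrow ?linear0 ?zero_lfunE ?eqxx ?mulr0 ?addr0 ?add0r //=;
          case: eqP => [?|?] //=; try subst).

Lemma te_e_e v w : te_e v * te_e w = if v == w then te_e v else 0.
Proof. te_table. Qed.
Lemma te_e_x v a : te_e v * te_x a = if v == qsrc a then te_x a else 0.
Proof. te_table. Qed.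
Lemma te_x_e a v : te_x a * te_e v = if v == qtgt a then te_x a else 0.
Proof. te_table. Qed.
Lemma te_x_x a b : te_x a * te_x b = 0.
Proof. te_table. Qed.
Lemma te_e_de v w : te_e v * te_de w = if v == w then te_de v else 0.
Proof. te_table. Qed.
Lemma te_de_e w v : te_de w * te_e v = if v == w then te_de v else 0.
Proof. te_table. Qed.
Lemma te_e_dx v a : te_e v * te_dx a = if v == qtgt a then te_dx a else 0.
Proof. te_table. Qed.
Lemma te_dx_e a v : te_dx a * te_e v = if v == qsrc a then te_dx a else 0.
Proof. te_table. Qed.
Lemma te_x_dx a b : te_x a * te_dx b = if a == b then te_de (qsrc a) else 0.
Proof. te_table. Qed.
Lemma te_dx_x b a : te_dx b * te_x a = if a == b then te_de (qtgt a) else 0.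
Proof. te_table. Qed.
Lemma te_de_x w a : te_de w * te_x a = 0.
Proof. te_table. Qed.
Lemma te_de_de v w : te_de v * te_de w = 0.
Proof. te_table. Qed.
Lemma te_de_dx v a : te_de v * te_dx a = 0.
Proof. te_table. Qed.
Lemma te_dx_dx a b : te_dx a * te_dx b = 0.
Proof. te_table. Qed.

Lemma dual_expand (f : Dual A) : f = \sum_v f (e v) *: ce v + \sum_a f (x a) *: cx a.
Proof.
apply/lfunP => y; rewrite {1}[y](sqz_expand B) linearD !linear_sum add_lfunE !sum_lfunE.
by congr (_ + _); apply: eq_bigr => i _; rewrite linearZ scale_lfunE; apply: mulrC.
Qed.

Lemma sum_te_e : \sum_v te_e v = 1.
Proof.
apply: triv_ext_eq => [|w|a]; rewrite ?(raddf_sum fst) ?(raddf_sum snd) /=.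
  exact: sum_idem gens.
all: by rewrite big1_eq.
Qed.

Lemma triv_ext_expand (u : triv_ext A) :
  u = \sum_v ce v u.1 *: te_e v + \sum_a cx a u.1 *: te_x a
    + \sum_v u.2 (e v) *: te_de v + \sum_a u.2 (x a) *: te_dx a.
Proof.
apply: triv_ext_eq => [|w|b]; rewrite ?(raddfD fst, raddfD snd) ?(raddf_sum fst)
  ?(raddf_sum snd) /= -!scaler_suml !scaler0 ?addr0 ?add0r -?dual_expand //.
exact: sqz_expand.
Qed.

End TrivialExtensionBasis.

Section BrauerRelations.
Variables (K : fieldType) (n' : nat).
Local Notation n := n'.+2.
Local Notation Q := (brauer_quiver n).
Variables (C : algType K) (e : 'I_n -> C) (x : qarr Q -> C).
Hypothesis gens : @quiver_gens K Q C *%R 1 e x.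
Hypothesis rels : forall r, r \in brauer_rels K n -> rel_val *%R 1 x r = 0.

Local Notation alpha i := (x (inl i)).
Local Notation beta i := (x (inr i)).

Lemma brauer_rels_adjacent (i j : 'I_n'.+1) : val j = i.+1 ->
  [/\ alpha i * alpha j = 0, beta j * beta i = 0 & beta i * alpha i = alpha j * beta j].
Proof.
move=> ji; have mem r : r \in [:: [:: (1, [:: inl i; inl j])];
                                  [:: (1, [:: inr j; inr i])];
                                  [:: (1, [:: inr i; inl i]); (-1, [:: inl j; inr j])]] ->
                        rel_val *%R 1 x r = 0.
  move=> r_in; apply: rels; rewrite mem_cat; apply/orP; left.
  apply/flattenP; eexists; last exact: r_in.
  by apply/allpairsPdep; exists i, j; rewrite mem_enum mem_filter mem_enum ji eqxx.
have alpha_rel := mem _ (mem_head _ _).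
have beta_rel : rel_val *%R 1 x [:: (1, [:: inr j; inr i])] = 0.
  by apply: mem; rewrite !inE eqxx orbT.
have comm_rel : rel_val *%R 1 x [:: (1, [:: inr i; inl i]); (-1, [:: inl j; inr j])] = 0.
  by apply: mem; rewrite !inE eqxx !orbT.
move: alpha_rel beta_rel comm_rel; rewrite /rel_val !big_cons !big_nil /= !addr0 !scale1r scaleN1r.
by move=> -> -> /eqP; rewrite subr_eq0 => /eqP.
Qed.

Lemma brauer_rels_cycle (i : 'I_n'.+1) :
  alpha i * beta i * alpha i = 0 /\ beta i * alpha i * beta i = 0.
Proof.
have mem r : r \in [:: [:: (1, [:: inl i; inr i; inl i])];
                       [:: (1, [:: inr i; inl i; inr i])]] -> rel_val *%R 1 x r = 0.
  move=> r_in; apply: rels; rewrite mem_cat; apply/orP; right.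
  apply/flattenP; eexists; last exact: r_in.
  by apply/mapP; exists i; rewrite ?mem_enum.
have aba_rel := mem _ (mem_head _ _).
have bab_rel : rel_val *%R 1 x [:: (1, [:: inr i; inl i; inr i])] = 0.
  by apply: mem; rewrite !inE eqxx orbT.
by move: aba_rel bab_rel; rewrite /rel_val !big_cons !big_nil /= !addr0 !scale1r.
Qed.

(* The socle at v is spanned by a 2-cycle through v: alpha_0 beta_0 at the  *)
(* first vertex and beta_(v-1) alpha_(v-1) at the others.                   *)
Definition out_arrow (v : 'I_n) : qarr Q :=
  if val v == 0%N then inl ord0 else inr (inord v.-1).
Definition in_arrow (v : 'I_n) : qarr Q :=
  if val v == 0%N then inr ord0 else inl (inord v.-1).
Definition brauer_soc v := x (out_arrow v) * x (in_arrow v).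

Lemma src_out_arrow v : qsrc (out_arrow v) = v.
Proof.
apply: val_inj; rewrite /out_arrow; case: ifP => /= [/eqP -> //|nz].
rewrite inordK; last by rewrite prednK ?lt0n ?nz // -ltnS.
by rewrite prednK // lt0n nz.
Qed.

Lemma tgt_in_arrow v : qtgt (in_arrow v) = v.
Proof.
apply: val_inj; rewrite /in_arrow; case: ifP => /= [/eqP -> //|nz].
rewrite inordK; last by rewrite prednK ?lt0n ?nz // -ltnS.
by rewrite prednK // lt0n nz.
Qed.

Lemma idem_soc w v : e w * brauer_soc v = if w == v then brauer_soc v else 0.
Proof.
by rewrite /brauer_soc mulrA (idem_arrow gens) src_out_arrow; case: ifP; rewrite ?mul0r.
Qed.

Lemma soc_idem v w : brauer_soc v * e w = if w == v then brauer_soc v else 0.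
Proof.
by rewrite /brauer_soc -mulrA (arrow_idem gens) tgt_in_arrow; case: ifP; rewrite ?mulr0.
Qed.

Lemma alpha_beta i : alpha i * beta i = brauer_soc (edge_lo i).
Proof.
rewrite /brauer_soc /out_arrow /in_arrow /=; case: ifP => [/eqP i0|nz].
  by have -> : i = ord0 by apply: val_inj.
have ik : val i = (@inord n' i.-1).+1 by rewrite inordK ?prednK // ?lt0n ?nz // ltnW.
by case: (brauer_rels_adjacent ik).
Qed.

Lemma beta_alpha i : beta i * alpha i = brauer_soc (edge_hi i).
Proof. by rewrite /brauer_soc /out_arrow /in_arrow /= inord_val. Qed.

(* An arrow next to a 2-cycle makes a path of length 3, killed by the cycle  *)
(* relations.                                                                *)
Lemma arrow_soc a v : x a * brauer_soc v = 0.
Proof.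
have [->|ne] := eqVneq v (qtgt a).
  case: a => i /=; first by rewrite -beta_alpha mulrA; case: (brauer_rels_cycle i).
  by rewrite -alpha_beta mulrA; case: (brauer_rels_cycle i).
have -> : brauer_soc v = e v * brauer_soc v by rewrite idem_soc eqxx.
by rewrite mulrA (arrow_idem gens) (negbTE ne) mul0r.
Qed.

Lemma soc_arrow v a : brauer_soc v * x a = 0.
Proof.
have [->|ne] := eqVneq v (qsrc a).
  case: a => i /=; first by rewrite -alpha_beta; case: (brauer_rels_cycle i).
  by rewrite -beta_alpha; case: (brauer_rels_cycle i).
have -> : brauer_soc v = brauer_soc v * e v by rewrite soc_idem eqxx.
by rewrite -mulrA (idem_arrow gens) (negbTE ne) mulr0.
Qed.

Definition brauer_index := (('I_n + qarr Q) + 'I_n)%type.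

Definition brauer_basis (k : brauer_index) : C :=
  match k with
  | inl (inl v) => e v
  | inl (inr a) => x a
  | inr v => brauer_soc v
  end.

Definition brauer_table (k l : brauer_index) : option brauer_index :=
  match k, l with
  | inl (inl v), inl (inl w) => if v == w then Some k else None
  | inl (inl v), inl (inr a) => if v == qsrc a then Some l else None
  | inl (inl v), inr w => if v == w then Some l else None
  | inl (inr a), inl (inl v) => if v == qtgt a then Some k else None
  | inl (inr (inl i)), inl (inr (inr j)) => if i == j then Some (inr (edge_lo i)) else None
  | inl (inr (inr i)), inl (inr (inl j)) => if i == j then Some (inr (edge_hi i)) else None
  | inr v, inl (inl w) => if w == v then Some k else None
  | _, _ => None
  end.

Lemma brauer_basis_mul k l :
  brauer_basis k * brauer_basis l = oapp brauer_basis 0 (brauer_table k l).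
Proof.
case: k => [[v|[i|i]]|v]; case: l => [[w|[j|j]]|w] /=;
  rewrite ?(idem_mul gens) ?(idem_arrow gens) ?(arrow_idem gens) ?idem_soc ?soc_idem
    ?arrow_soc ?soc_arrow /=; try by case: ifP.
all: try done.
- have [ji|nji] := eqVneq (val j) i.+1; first by case: (brauer_rels_adjacent ji).
  apply: (arrow_mul_eq0 gens); apply/eqP => /(congr1 val) /= ij.
  by rewrite ij eqxx in nji.
- have [<-|nij] := eqVneq i j; first exact: alpha_beta.
  apply: (arrow_mul_eq0 gens); apply/eqP => /(congr1 val) /= [] ij.
  by move/eqP: nij; apply; apply: val_inj.
- have [<-|nij] := eqVneq i j; first exact: beta_alpha.
  apply: (arrow_mul_eq0 gens); apply/eqP => /(congr1 val) /= ij.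
  by move/eqP: nij; apply; apply: val_inj.
- have [ij|nij] := eqVneq (val i) j.+1; first by case: (brauer_rels_adjacent ij).
  apply: (arrow_mul_eq0 gens); apply/eqP => /(congr1 val) /= ij.
  by move: nij; rewrite /= ij eqxx.
- by rewrite {2}/brauer_soc mulrA soc_arrow mul0r.
Qed.

Definition is_idem_index (k : brauer_index) : bool :=
  if k is inl (inl _) then true else false.

Lemma brauer_one : 1 = \sum_(k | is_idem_index k) brauer_basis k.
Proof.
rewrite big_sumType /= [X in _ + X]big_pred0 // addr0.
by rewrite big_sumType /= [X in _ + X]big_pred0 // addr0 (sum_idem gens).
Qed.

End BrauerRelations.

Section BrauerTrivialExtension.
Variables (K : fieldType) (n' : nat) (o : 'I_n'.+1 -> bool) (A : falgType K).
Local Notation n := n'.+2.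
Variable B : sqzero_basis (@An_quiver n o) A.
Local Notation e := (sqz_idem B).
Local Notation x := (sqz_arrow B).
Local Notation ce := (sqz_idem_coord B).
Local Notation cx := (sqz_arrow_coord B).

Definition brauer_arrow_te (a : qarr (brauer_quiver n)) : triv_ext A :=
  match a with
  | inl i => if o i then te_x B i else te_dx B i
  | inr i => if o i then te_dx B i else te_x B i
  end.
Local Notation X := brauer_arrow_te.

Lemma te_brauer_gens : @quiver_gens K (brauer_quiver n) (triv_ext A) *%R 1 (te_e B) X.
Proof.
split; [exact: te_e_e B | exact: sum_te_e B |].
by case=> i /=; case oi: (o i);
  rewrite ?te_e_x ?te_e_dx /= oi eqxx ?te_x_e ?te_dx_e /= oi eqxx.
Qed.

Lemma te_alpha_beta i : X (inl i) * X (inr i) = te_de B (edge_lo i).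
Proof. by rewrite /=; case oi: (o i); rewrite ?te_x_dx ?te_dx_x eqxx /= oi. Qed.

Lemma te_beta_alpha i : X (inr i) * X (inl i) = te_de B (edge_hi i).
Proof. by rewrite /=; case oi: (o i); rewrite ?te_x_dx ?te_dx_x eqxx /= oi. Qed.

Definition brauer_edge (a : qarr (brauer_quiver n)) : 'I_n'.+1 :=
  match a with inl i => i | inr i => i end.

Lemma te_brauer_arrow_mul_eq0 a b : brauer_edge a != brauer_edge b -> X a * X b = 0.
Proof.
case: a => i; case: b => j /= nij; case: (o i); case: (o j);
  by rewrite ?te_x_x ?te_x_dx ?te_dx_x ?te_dx_dx // ?(negbTE nij) //
    eq_sym (negbTE nij).
Qed.

Lemma te_brauer_rels r : r \in brauer_rels K n -> rel_val *%R 1 X r = 0.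
Proof.
rewrite mem_cat => /orP[] /flattenP[s s_in r_in].
  case/allpairsPdep: s_in => i [j [_ j_in s_def]]; subst s.
  move: j_in; rewrite mem_filter => /andP[/eqP ji _].
  have nij : i != j by apply/eqP => ij; move: ji; rewrite ij => /n_Sn.
  move: r_in; rewrite !inE => /or3P[] /eqP ->;
    rewrite /rel_val !big_cons big_nil /= ?addr0 ?scale1r.
  - exact: (@te_brauer_arrow_mul_eq0 (inl i) (inl j)).
  - by apply: (@te_brauer_arrow_mul_eq0 (inr j) (inr i)); rewrite eq_sym.
  - rewrite te_beta_alpha te_alpha_beta scaleN1r.
    have -> : edge_hi i = edge_lo j :> 'I_n by apply: val_inj; rewrite /= ji.
    exact: subrr.
case/mapP: s_in => i _ s_def; subst s.
move: r_in; rewrite !inE => /orP[] /eqP ->;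
  rewrite /rel_val !big_cons big_nil /= ?addr0 ?scale1r.
- by rewrite te_alpha_beta /=; case: (o i); rewrite ?te_de_x ?te_de_dx.
- by rewrite te_beta_alpha /=; case: (o i); rewrite ?te_de_x ?te_de_dx.
Qed.

Lemma te_brauer_soc v : brauer_soc X v = te_de B v.
Proof.
rewrite /brauer_soc /out_arrow /in_arrow; case: ifP => [/eqP v0|nz].
  by rewrite te_alpha_beta; congr te_de; apply: val_inj.
rewrite te_beta_alpha; congr te_de; apply: val_inj => /=.
have v_gt0 : (0 < v)%N by rewrite lt0n nz.
have v_bound : (v.-1 < n'.+1)%N by rewrite -ltnS prednK.
by rewrite inordK // prednK.
Qed.

Definition te_brauer_coord (k : brauer_index n') (u : triv_ext A) : K :=
  match k with
  | inl (inl v) => ce v u.1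
  | inl (inr (inl i)) => if o i then cx i u.1 else u.2 (x i)
  | inl (inr (inr i)) => if o i then u.2 (x i) else cx i u.1
  | inr v => u.2 (e v)
  end.

Lemma te_brauer_coordD k c u w :
  te_brauer_coord k (c *: u + w) = c * te_brauer_coord k u + te_brauer_coord k w.
Proof.
have sndD y : (c *: u + w).2 y = c * u.2 y + w.2 y by rewrite /= add_lfunE scale_lfunE.
by case: k => [[v|[i|i]]|v] /=; rewrite ?linearP ?sndD //;
  case: (o i); rewrite ?linearP ?sndD.
Qed.

Lemma te_brauer_coord_span u :
  u = \sum_k te_brauer_coord k u *: brauer_basis (te_e B) X k.
Proof.
rewrite !big_sumType /=.
under [S in _ = _ + S]eq_bigr do rewrite te_brauer_soc.
rewrite {1}[u](triv_ext_expand B) -!addrA; congr (_ + _).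
rewrite [RHS]addrA [RHS]addrC addrCA; congr (_ + _).
by rewrite -!big_split /=; apply: eq_bigr => i _; case: (o i) => //; apply: addrC.
Qed.

Lemma te_brauer_coord_basis k l :
  te_brauer_coord k (brauer_basis (te_e B) X l) = (l == k)%:R.
Proof.
case: k => [[v|[i|i]]|v]; case: l => [[w|[j|j]]|w];
  rewrite /brauer_basis ?te_brauer_soc /= ?(inj_eq inl_inj, inj_eq inr_inj);
  try (have [<-|nji] := eqVneq j i); try (case: (o i)); try (case: (o j));
  rewrite /= ?zero_lfunE ?linear0 ?sqz_idem_coord_idem ?sqz_idem_coord_arrow
    ?sqz_arrow_coord_idem ?sqz_arrow_coord_arrow ?eqxx // ?(negbTE nji) //;
  by rewrite eq_sym ?(negbTE nji).
Qed.

Lemma te_brauer_presents : @presents K (TExt A) (@texmul K A) (texone A)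
  (brauer_quiver n) (brauer_rels K n) (te_e B) X.
Proof.
split; [exact: te_brauer_gens | exact: te_brauer_rels |].
move=> C e' x' gens' rels'.
have [homH hom_basis hom_uniq] := table_hom_universal te_brauer_coordD
  te_brauer_coord_span te_brauer_coord_basis
  (brauer_basis_mul te_brauer_gens te_brauer_rels) (brauer_basis_mul gens' rels')
  (brauer_one te_brauer_gens) (brauer_one gens').
exists (table_hom (brauer_basis e' x') te_brauer_coord); split=> //.
- by move=> v; apply: (hom_basis (inl (inl v))).
- by move=> a; apply: (hom_basis (inl (inr a))).
- move=> psi psiH psie psix; apply: hom_uniq => // -[[v|a]|v] //=.
  by case: psiH => _ psiM _; rewrite /brauer_soc psiM !psix.
Qed.

End BrauerTrivialExtension.

Section LoopTrivialExtension.
Variables (K : fieldType) (o : 'I_0 -> bool) (A : falgType K).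
Variable B : sqzero_basis (@An_quiver 1 o) A.

Definition loop_basis (b : bool) : triv_ext A :=
  if b then te_de B ord0 else te_e B ord0.

Definition loop_coord (b : bool) (u : triv_ext A) : K :=
  if b then u.2 (sqz_idem B ord0) else sqz_idem_coord B ord0 u.1.

Definition loop_table (b c : bool) : option bool :=
  if b && c then None else Some (b || c).

Lemma loop_table_mul (C : algType K) (e x : C) :
  e * e = e -> e * x = x -> x * e = x -> x * x = 0 ->
  forall b c, (if b then x else e) * (if c then x else e) =
              oapp (fun b => if b then x else e) 0 (loop_table b c).
Proof. by move=> ee ex xe xx [] []. Qed.

Lemma sum_unit (V : nmodType) (F : unit -> V) : \sum_(v : unit) F v = F tt.
Proof. by rewrite (bigD1 tt) //= big_pred0 ?addr0 // => -[]. Qed.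

Lemma te_loop_gens :
  @quiver_gens K loop_quiver (triv_ext A) *%R 1
    (fun=> loop_basis false) (fun=> loop_basis true).
Proof.
split=> [[] []||[]] /=; first by rewrite te_e_e eqxx.
  by rewrite sum_unit -(sum_te_e B) big_ord1.
by rewrite te_e_de eqxx te_de_e eqxx.
Qed.

Lemma te_loop_rels r : r \in loop_rels K -> rel_val *%R 1 (fun=> loop_basis true) r = 0.
Proof.
by rewrite inE => /eqP ->; rewrite /rel_val big_cons big_nil /= addr0 scale1r te_de_de.
Qed.

Lemma loop_coordD k c u w :
  loop_coord k (c *: u + w) = c * loop_coord k u + loop_coord k w.
Proof. by case: k; rewrite /= ?linearP // add_lfunE scale_lfunE. Qed.

Lemma loop_coord_span u : u = \sum_k loop_coord k u *: loop_basis k.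
Proof.
rewrite big_bool /= {1}[u](triv_ext_expand B) !big_ord1 !big_ord0 !addr0.
exact: addrC.
Qed.

Lemma loop_coord_basis k l : loop_coord k (loop_basis l) = (l == k)%:R.
Proof.
by case: k; case: l; rewrite /= ?zero_lfunE ?linear0 ?sqz_idem_coord_idem ?eqxx.
Qed.

Lemma te_loop_presents : @presents K (TExt A) (@texmul K A) (texone A)
  loop_quiver (loop_rels K) (fun=> loop_basis false) (fun=> loop_basis true).
Proof.
split; [exact: te_loop_gens | exact: te_loop_rels |].
move=> C e' x' gens' rels'.
pose bC (b : bool) : C := if b then x' tt else e' tt.
have x'x' : x' tt * x' tt = 0.
  by have := rels' _ (mem_head _ _); rewrite /rel_val big_cons big_nil /= addr0 scale1r.
have tableC := loop_table_mul (idem_mul gens' tt tt) (idem_arrow gens' tt tt)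
  (arrow_idem gens' tt tt) x'x'.
have tableV := loop_table_mul (te_e_e B ord0 ord0) (te_e_de B ord0 ord0)
  (te_de_e B ord0 ord0) (te_de_de B ord0 ord0).
have oneV : 1 = \sum_(k | ~~ k) loop_basis k.
  by rewrite (big_pred1 false) => [|[]] //; rewrite -(sum_te_e B) big_ord1.
have oneC : 1 = \sum_(k | ~~ k) bC k.
  by rewrite (big_pred1 false) => [|[]] //; rewrite -(sum_idem gens') sum_unit.
have [homH hom_basis hom_uniq] := table_hom_universal loop_coordD loop_coord_span
  loop_coord_basis tableV tableC oneV oneC.
exists (table_hom bC loop_coord); split=> //.
- by case; apply: (hom_basis false).
- by case; apply: (hom_basis true).
- by move=> psi psiH psie psix; apply: hom_uniq => // -[]; [apply: psix | apply: psie].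
Qed.

End LoopTrivialExtension.

Lemma An_quiver_loopfree n (o : 'I_n.-1 -> bool) (a : qarr (An_quiver o)) :
  qsrc a != qtgt a.
Proof.
by rewrite /=; case: (o a); apply/eqP => /(congr1 val) /=; [move/n_Sn | move/esym/n_Sn].
Qed.

Unset Implicit Arguments.

Theorem lemma3p8 (K : closedFieldType) (n : nat) (o : 'I_n.-1 -> bool)
    (Z : seq ('I_n.-1 * 'I_n.-1)) (A : falgType K)
    (e : 'I_n -> A) (x : 'I_n.-1 -> A) :
  (0 < n)%N ->
  @presents K A *%R 1 (An_quiver o) (@zero_rels K (An_quiver o) Z) e x ->
  @admissible K (An_quiver o) A x ->
  @gentle K (An_quiver o) A x ->
  rad_sq_zero A ->
  is_brauer_line n (@texmul K A) (texone A).
Proof.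
move=> n_gt0 pres adm _ rad2.
have [B _] := zero_rels_sqzero_basis pres adm rad2 (@An_quiver_loopfree n o).
clear pres adm rad2 Z e x.
move: n o B n_gt0 => [|[|n']] o B //= _.
  exists (fun=> loop_basis B false), (fun=> loop_basis B true).
  exact: te_loop_presents.
by exists (te_e B), (brauer_arrow_te B); apply: te_brauer_presents.
Qed.
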